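(* Let $M$ be a finite $\mathscr R$-trivial monoid and $m\in M$. Then the idempotents of $\widetilde L_m$ are exactly the elements of the minimal ideal of $\mathrm{St}_R(m)$, and this set is moreover an $\mathscr L$-class of $M$.
   Context: $M$ is $\mathscr R$-trivial if $mM=nM$ implies $m=n$. $\mathrm{St}_R(m)=\{n\in M: mn=m\}$ (a submonoid). Define $m\le_{\widetilde{\mathscr L}}n$ if for every idempotent $e$, $ne=n$ implies $me=m$; $m\mathrel{\widetilde{\mathscr L}}n$ if $m\le_{\widetilde{\mathscr L}}n$ and $n\le_{\widetilde{\mathscr L}}m$; $\widetilde L_m$ is the $\widetilde{\mathscr L}$-class of $m$. An $\mathscr L$-class of $M$ is a set $\{n: Mn=Mx\}$ for some $x\in M$. *)

(* A finite monoid is a finType T with an operation mul and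
   unit one, satisfying the monoid axioms (given as hypotheses). *)
From mathcomp Require Import all_boot.
Set Implicit Arguments. Unset Strict Implicit. Unset Printing Implicit Defensive.

Section MonoidDefs.
Variables (T : finType) (mul : T -> T -> T).

Definition rideal (m : T) : {set T} := [set mul m x | x : T].
Definition lideal (m : T) : {set T} := [set mul x m | x : T].

Definition R_trivial : Prop := forall m n : T, rideal m = rideal n -> m = n.

Definition StR (m : T) : {set T} := [set n | mul m n == m].

Definition idempotent_elt (e : T) : bool := mul e e == e.

Definition leLt (m n : T) : bool :=
  [forall e, idempotent_elt e ==> (mul n e == n) ==> (mul m e == m)].
Definition Lt (m n : T) : bool := leLt m n && leLt n m.
Definition Lt_class (m : T) : {set T} := [set n | Lt n m].

Definition is_ideal_of (S I : {set T}) : bool :=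
  [&& I \subset S, I != set0 &
      [forall s in S, forall x in I, (mul s x \in I) && (mul x s \in I)]].

(* the minimal ideal of S: intersection of all ideals of S
   (for a finite monoid S this is the unique minimal ideal) *)
Definition min_ideal (S : {set T}) : {set T} :=
  \bigcap_(I : {set T} | is_ideal_of S I) I.

Definition L_class (x : T) : {set T} := [set n | lideal n == lideal x].

End MonoidDefs.

(* The stabilizer St_R(m) is a submonoid, and R-triviality gives it a left
   zero: replacing a by a s whenever a s <> a strictly shrinks the right ideal
   aM, so the process stops at some a with a s = a for all s in St_R(m).  In any
   semigroup the left zeros, when they exist, form the minimal ideal, because a
   left zero z equals z i for any i in an ideal.  An idempotent e with
   e L~ m has m e = m and e = e z for a left zero z, so e s = e z s = e z = e;
   conversely a left zero of St_R(m) is an idempotent L~-related to m.  Finally,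
   if Mn = Mz with z a left zero, then n = n b n for some b, hence n b = n by
   R-triviality, so n is idempotent and again a left zero of St_R(m). *)
From mathcomp Require Import all_boot.

Set Implicit Arguments. Unset Strict Implicit. Unset Printing Implicit Defensive.

Section Semigroup.
Variables (T : finType) (mul : T -> T -> T).
Hypothesis mulA : associative mul.

Definition left_zeros (S : {set T}) : {set T} :=
  [set k in S | [forall s in S, mul k s == k]].

Lemma left_zerosP (S : {set T}) k :
  reflect (k \in S /\ forall s, s \in S -> mul k s = k) (k \in left_zeros S).
Proof.
rewrite inE; apply: (iffP andP) => [[kS /forall_inP kz]|[kS kz]].
  by split=> // s /kz /eqP.
by split=> //; apply/forall_inP => s /kz ->.
Qed.

Lemma leLtP x y :
  reflect (forall e, mul e e = e -> mul y e = y -> mul x e = x) (leLt mul x y).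
Proof.
apply: (iffP forallP) => [H e /eqP ee /eqP ye|H e].
  by have /implyP/(_ ee)/implyP/(_ ye)/eqP := H e.
by apply/implyP => /eqP ee; apply/implyP => /eqP ye; rewrite H.
Qed.

Lemma mem_lideal x u : mul u x \in lideal mul x.
Proof. by apply/imsetP; exists u. Qed.

Lemma lideal_subset x y : x \in lideal mul y -> lideal mul x \subset lideal mul y.
Proof.
by case/imsetP=> a _ ->; apply/subsetP => _ /imsetP [u _ ->]; rewrite mulA mem_lideal.
Qed.

Lemma rideal_mulr_sub x y : rideal mul (mul x y) \subset rideal mul x.
Proof. by apply/subsetP => _ /imsetP [u _ ->]; apply/imsetP; exists (mul y u). Qed.

Hypothesis HR : R_trivial mul.

Lemma in_rideal_mulr_eq x y : x \in rideal mul (mul x y) -> mul x y = x.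
Proof.
case/imsetP=> c _ xE; apply: HR; apply/eqP; rewrite eqEsubset rideal_mulr_sub /=.
by apply/subsetP => _ /imsetP [u _ ->]; rewrite {1}xE -mulA; apply/imsetP; exists (mul c u).
Qed.

Section MulClosed.
Variable S : {set T}.
Hypothesis mulS : {in S &, forall x y, mul x y \in S}.

Lemma left_zeros_ideal : left_zeros S != set0 -> is_ideal_of mul S (left_zeros S).
Proof.
move=> nz; apply/and3P; split=> //; first by apply/subsetP => k /left_zerosP [].
apply/forall_inP => s sS; apply/forall_inP => k klz.
have/left_zerosP [kS kz] := klz.
rewrite kz // klz andbT; apply/left_zerosP; split; first exact: mulS.
by move=> t tS; rewrite -mulA kz.
Qed.

Lemma left_zeros_sub_ideal I : is_ideal_of mul S I -> left_zeros S \subset I.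
Proof.
case/and3P => IS /set0Pn [i iI] /forall_inP Iideal.
apply/subsetP => z /left_zerosP [zS zz].
have /forall_inP/(_ i iI)/andP [ziI _] := Iideal z zS.
by rewrite zz ?(subsetP IS) in ziI.
Qed.

Lemma min_ideal_left_zeros : left_zeros S != set0 -> min_ideal mul S = left_zeros S.
Proof.
move=> nz; apply/eqP; rewrite eqEsubset (bigcap_inf _ (left_zeros_ideal nz)) /=.
by apply/bigcapsP => I; apply: left_zeros_sub_ideal.
Qed.

Lemma left_zeros_exist : S != set0 -> left_zeros S != set0.
Proof.
case/set0Pn => a aS; have [n] := ubnP #|rideal mul a|.
elim: n a aS => // n IH a aS ltan.
have [lz|] := boolP [forall s in S, mul a s == a].
  by apply/set0Pn; exists a; rewrite inE aS.
case/forall_inPn => s sS nas.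
have shrink : rideal mul (mul a s) \proper rideal mul a.
  rewrite properEneq rideal_mulr_sub andbT.
  by apply: contra nas => /eqP/HR ->.
apply: (IH (mul a s)); first exact: mulS.
by rewrite -ltnS (leq_trans _ ltan) // ltnS proper_card.
Qed.

End MulClosed.

End Semigroup.

Section Stabilizer.
Variables (T : finType) (mul : T -> T -> T) (one : T).
Hypotheses (mulA : associative mul) (mul1m : left_id one mul) (mulm1 : right_id one mul).
Variable m : T.

Let S := StR mul m.

Lemma StR_mul_closed : {in S &, forall x y, mul x y \in S}.
Proof. by move=> x y; rewrite !inE => /eqP mx /eqP my; rewrite mulA mx my. Qed.

Lemma StR_neq0 : S != set0.
Proof. by apply/set0Pn; exists one; rewrite inE mulm1. Qed.

Lemma idempotent_Lt_class z : z \in left_zeros mul S ->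
  [set e in Lt_class mul m | idempotent_elt mul e] = left_zeros mul S.
Proof.
case/left_zerosP => zS zlz; have /eqP mz : mul m z == m by rewrite inE in zS.
apply/setP => e; apply/setIdP/left_zerosP => [[]|[eS elz]].
  rewrite inE => /andP [/leLtP le_em /leLtP le_me] /eqP ee.
  have me : mul m e = m := le_me e ee ee.
  have ez : mul e z = e := le_em z (zlz z zS) mz.
  split; first by rewrite inE me.
  by move=> s sS; rewrite -{1}ez -mulA zlz.
have ee : mul e e = e := elz e eS.
have /eqP me : mul m e == m by rewrite inE in eS.
split; last by rewrite /idempotent_elt ee.
rewrite inE; apply/andP; split; apply/leLtP => f ff.
  by move=> mf; apply: elz; rewrite inE mf.
by move=> ef; rewrite -me -mulA ef.
Qed.

Hypothesis HR : R_trivial mul.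

Lemma L_class_left_zero z : z \in left_zeros mul S -> L_class mul z = left_zeros mul S.
Proof.
move=> zlz0; have/left_zerosP [zS zlz] := zlz0.
have /eqP mz : mul m z == m by rewrite inE in zS.
have zz : mul z z = z := zlz z zS.
apply/setP => n; rewrite inE; apply/eqP/left_zerosP => [Lnz|[nS nlz]].
  have /imsetP [a _ na] : n \in lideal mul z by rewrite -Lnz -{1}[n]mul1m mem_lideal.
  have /imsetP [b _ zb] : z \in lideal mul n by rewrite Lnz -{1}[z]mul1m mem_lideal.
  have nz : mul n z = n by rewrite na -mulA zz.
  have nb : mul n b = n.
    by apply: in_rideal_mulr_eq => //; apply/imsetP; exists n; rewrite // -mulA -zb nz.
  have nn : mul n n = n by rewrite -{1}nb -mulA -zb nz.
  have zn : mul z n = z by rewrite zb -mulA nn.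
  split; first by rewrite inE -{1}mz -mulA zn mz.
  by move=> s sS; rewrite na -mulA zlz.
apply/eqP; rewrite eqEsubset !lideal_subset //.
  by rewrite -(zlz n nS) mem_lideal.
by rewrite -(nlz z zS) mem_lideal.
Qed.

End Stabilizer.

Theorem mainTheorem20 (T : finType) (mul : T -> T -> T) (one : T)
    (mulA : associative mul) (mul1m : left_id one mul) (mulm1 : right_id one mul)
    (HR : R_trivial mul) (m : T) :
  [set e in Lt_class mul m | idempotent_elt mul e] = min_ideal mul (StR mul m)
  /\ exists x : T, min_ideal mul (StR mul m) = L_class mul x.
Proof.
have mulS := StR_mul_closed mulA (m := m).
have lz_neq0 := left_zeros_exist mulA HR mulS (StR_neq0 mulm1 m).
have [z zlz] := set0Pn _ lz_neq0.
rewrite (min_ideal_left_zeros mulA mulS lz_neq0); split.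
  exact: (idempotent_Lt_class mulA zlz).
by exists z; rewrite (L_class_left_zero mulA mul1m HR zlz).
Qed.
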